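(* Let $a_0,a_1,a_2$ be elements of a field $K$ and let $(F(n,k))_{n\ge 0,\,k\in\mathbb{Z}}$ be defined by $F(0,0)=1$, $F(n,k)=0$ whenever $k<0$ or $k>n$, and \[ F(n,k)=F(n-1,k-1)+(a_2n+a_1k+a_0)\,F(n-1,k)\qquad(n\ge1). \] Then for every $n\ge 0$, in the polynomial ring $K[x]$, \[ \prod_{i=0}^{n-1}(x+ia_2)=\sum_{k=0}^{n}F(n,k)\prod_{i=0}^{k-1}(x-a_0-a_2-ia_1). \]
   Context: Empty products equal $1$. *)

From mathcomp Require Import all_boot all_order all_algebra.
Set Implicit Arguments. Unset Strict Implicit. Unset Printing Implicit Defensive.
Import Order.TTheory GRing.Theory Num.Theory.
Local Open Scope ring_scope.

Fixpoint Ftri (K : fieldType) (a0 a1 a2 : K) (n : nat) (k : int) : K :=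
  match n with
  | 0%N => if k == 0 then 1 else 0
  | m.+1 => if (0 <= k) && (k <= (m.+1)%:Z)
            then Ftri a0 a1 a2 m (k - 1) + (a2 * (m.+1)%:R + a1 * k%:~R + a0) * Ftri a0 a1 a2 m k
            else 0
  end.

From mathcomp Require Import all_boot all_order all_algebra.
From mathcomp Require Import ring.
Set Implicit Arguments. Unset Strict Implicit.
Import Order.TTheory GRing.Theory Num.Theory.
Local Open Scope ring_scope.

(* Write B k for the right-hand basis polynomial of degree k.  Multiplying
   B k by (X + n a2) gives B (k+1) + (a2 (n+1) + a1 k + a0) B k, which is
   exactly the recurrence of F read columnwise; so multiplying the expansion
   of the product of the first n factors by the next one yields the
   expansion with coefficients F(n+1, .), and induction on n concludes. *)

Section FallingPoly.
Variables (R : comNzRingType) (c d : R).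

Definition falling_poly (k : nat) : {poly R} :=
  \prod_(i < k) ('X - (c + i%:R * d)%:P).

Lemma falling_polyS k :
  falling_poly k.+1 = falling_poly k * ('X - (c + k%:R * d)%:P).
Proof. by rewrite /falling_poly big_ord_recr. Qed.

Lemma falling_polyMXaddC k (b : R) :
  falling_poly k * ('X + b%:P) =
  falling_poly k.+1 + (b + c + k%:R * d)%:P * falling_poly k.
Proof. by rewrite falling_polyS !polyCD polyCM; ring. Qed.

End FallingPoly.

Section Ftri.
Variables (K : fieldType) (a0 a1 a2 : K).
Local Notation F := (Ftri a0 a1 a2).

Lemma Ftri_lt0 n (k : int) : k < 0 -> F n k = 0.
Proof.
case: n => [|n] /= k_lt0; last by rewrite lt_geF.
by case: eqP k_lt0 => // ->.
Qed.

Lemma Ftri_gt n (k : nat) : (n < k)%N -> F n k = 0.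
Proof.
case: n => [|n] /= n_lt_k; first by case: k n_lt_k.
by rewrite lez_nat leqNgt n_lt_k.
Qed.

Lemma FtriS n (k : nat) : (k <= n.+1)%N ->
  F n.+1 k = F n (k%:Z - 1) + (a2 * n.+1%:R + a1 * k%:R + a0) * F n k.
Proof. by move=> k_le /=; rewrite lez_nat k_le. Qed.

Local Notation B := (falling_poly (a0 + a2) a1).

Definition Ftri_expansion n : {poly K} := \sum_(k < n.+1) (F n k)%:P * B k.

Lemma Ftri_expansionMXaddC n :
  Ftri_expansion n * ('X + (n%:R * a2)%:P) = Ftri_expansion n.+1.
Proof.
pose coef (k : nat) := a2 * n.+1%:R + a1 * k%:R + a0.
have coefE k : n%:R * a2 + (a0 + a2) + k%:R * a1 = coef k.
  by rewrite /coef mulrSr; ring.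
rewrite /Ftri_expansion mulr_suml.
under eq_bigr do rewrite -mulrA falling_polyMXaddC coefE mulrDr mulrA -polyCM.
rewrite big_split.
have -> : \sum_(k < n.+1) (F n k)%:P * B k.+1 =
          \sum_(k < n.+2) (F n (k%:Z - 1))%:P * B k.
  rewrite [RHS]big_ord_recl Ftri_lt0 // polyC0 mul0r add0r.
  by apply: eq_bigr => k _; rewrite -predn_int.
have -> : \sum_(k < n.+1) (F n k * coef k)%:P * B k =
          \sum_(k < n.+2) (coef k * F n k)%:P * B k.
  rewrite [RHS]big_ord_recr /= Ftri_gt // mulr0 polyC0 mul0r addr0.
  by apply: eq_bigr => k _; rewrite [_ * coef k]mulrC.
rewrite -big_split; apply: eq_bigr => k _.
rewrite FtriS; last by rewrite -ltnS.
by rewrite polyCD [RHS]mulrDl.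
Qed.

End Ftri.

Theorem mainTheorem6 (K : fieldType) (a0 a1 a2 : K) (n : nat) :
  \prod_(i < n) ('X + (i%:R * a2)%:P) =
  \sum_(k < n.+1) (Ftri a0 a1 a2 n (k%:Z))%:P *
     \prod_(i < k) ('X - (a0 + a2 + i%:R * a1)%:P) :> {poly K}.
Proof.
rewrite -[RHS]/(Ftri_expansion a0 a1 a2 n).
elim: n => [|n IH].
  by rewrite big_ord0 /Ftri_expansion big_ord1 /falling_poly big_ord0 mulr1.
by rewrite big_ord_recr /= IH Ftri_expansionMXaddC.
Qed.
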